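(* For every $n$-qubit pure state $\ket\psi$, the support of $p_\psi$ is contained in $\mathrm{Weyl}(\ket\psi)^\perp$.
   Context: For $x=(a,b)\in\mathbb F_2^{2n}$, $W_x = i^{a\cdot b}X^{a_1}Z^{b_1}\otimes\cdots\otimes X^{a_n}Z^{b_n}$ ($a\cdot b$ over the integers); $p_\psi(x)=2^{-n}\braket{\psi|W_x|\psi}^2$; $\mathrm{Weyl}(\ket\psi)=\{x:W_x\ket\psi=\pm\ket\psi\}$ (a subspace). The symplectic product is $[x,y]=\sum_{j=1}^n(x_jy_{n+j}+x_{n+j}y_j)\bmod 2$, and $T^\perp=\{a:[x,a]=0\ \forall x\in T\}$. *)

From HB Require Import structures.
From mathcomp Require Import all_boot all_order all_algebra.
From mathcomp Require Import mxtens.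
Set Implicit Arguments.
Unset Strict Implicit.
Unset Printing Implicit Defensive.
Import Order.TTheory GRing.Theory Num.Theory.
Local Open Scope ring_scope.

(* Scalars: an arbitrary numClosedFieldType C (e.g. the complex numbers),
   with imaginary unit 'i and conjugation ^*. *)

(* Elements x = (a,b) of F_2^{2n}: a row vector of length n + n;
   a_j = x (lshift j), b_j = x (rshift j). *)
Definition F2vec (n : nat) := 'rV['F_2]_(n + n).

Definition xa n (x : F2vec n) (j : 'I_n) : 'F_2 := x 0 (lshift n j).
Definition xb n (x : F2vec n) (j : 'I_n) : 'F_2 := x 0 (rshift n j).

Definition bitn (c : 'F_2) : nat := nat_of_ord c.

Definition PauliX (C : numClosedFieldType) : 'M[C]_2 :=
  \matrix_(i, j) (i != j)%:R.
Definition PauliZ (C : numClosedFieldType) : 'M[C]_2 :=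
  \matrix_(i, j) (if i == j then (if i == 0 :> 'I_2 then 1 else -1) else 0).

Fixpoint kronn (C : numClosedFieldType) (n : nat) : ('I_n -> 'M[C]_2) -> 'M[C]_(2 ^ n) :=
  match n with
  | 0 => fun _ => 1%:M
  | k.+1 => fun P =>
      castmx (esym (expnS 2 k), esym (expnS 2 k))
        (tensmx (P ord0) (kronn (fun j => P (lift ord0 j))))
  end.

(* W_x = i^{a.b} X^{a_1}Z^{b_1} (x) ... (x) X^{a_n}Z^{b_n}, a.b over the integers *)
Definition Weylop (C : numClosedFieldType) n (x : F2vec n) : 'M[C]_(2 ^ n) :=
  ('i ^+ (\sum_(j < n) bitn (xa x j) * bitn (xb x j))%N) *:
    kronn (fun j => PauliX C ^+ bitn (xa x j) *m PauliZ C ^+ bitn (xb x j)).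

Definition bra (C : numClosedFieldType) m (v : 'cV[C]_m) : 'rV[C]_m :=
  (map_mx Num.conj v)^T.

Definition pure_state (C : numClosedFieldType) n (psi : 'cV[C]_(2 ^ n)) : Prop :=
  (bra psi *m psi) 0 0 = 1.

Definition expval (C : numClosedFieldType) n (psi : 'cV[C]_(2 ^ n)) (x : F2vec n) : C :=
  (bra psi *m Weylop C x *m psi) 0 0.

Definition p_psi (C : numClosedFieldType) n (psi : 'cV[C]_(2 ^ n)) (x : F2vec n) : C :=
  (2 ^+ n)^-1 * (expval psi x) ^+ 2.

Definition supp_p (C : numClosedFieldType) n (psi : 'cV[C]_(2 ^ n)) : {set F2vec n} :=
  [set x | p_psi psi x != 0].

Definition Weyl (C : numClosedFieldType) n (psi : 'cV[C]_(2 ^ n)) : {set F2vec n} :=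
  [set x | (Weylop C x *m psi == psi) || (Weylop C x *m psi == - psi)].

Definition symp n (x y : F2vec n) : 'F_2 :=
  \sum_(j < n) (xa x j * xb y j + xb x j * xa y j).

Definition sperp n (T : {set F2vec n}) : {set F2vec n} :=
  [set a | [forall x in T, symp x a == 0]].

From HB Require Import structures.
From mathcomp Require Import all_boot all_order all_algebra mxtens.
Set Implicit Arguments.
Unset Strict Implicit.
Unset Printing Implicit Defensive.
Import Order.TTheory GRing.Theory Num.Theory.
Local Open Scope ring_scope.

(* Let y be in Weyl(psi), so that W_y psi = s psi with s = 1 or -1, and suppose
   [y, x] = 1.  Single-qubit Pauli monomials commute up to a sign, and these
   signs multiply to (-1)^[y, x] across the tensor factors, so W_y and W_x
   anticommute.  Since W_y is Hermitian, <psi| W_y = s <psi| as well, and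
   evaluating <psi| W_y W_x |psi> = - <psi| W_x W_y |psi> from both ends gives
   s <W_x> = - s <W_x>, i.e. <psi| W_x |psi> = 0 and p_psi(x) = 0. *)

Section ConjugateTranspose.
Variable C : numClosedFieldType.

Definition adjmx m n (A : 'M[C]_(m, n)) : 'M[C]_(n, m) := (map_mx Num.conj A)^T.
Lemma adjmxM m n p (A : 'M[C]_(m, n)) (B : 'M[C]_(n, p)) :
  adjmx (A *m B) = adjmx B *m adjmx A.
Proof. by rewrite /adjmx map_mxM trmx_mul. Qed.

Lemma adjmx1 m : adjmx (1%:M : 'M[C]_m) = 1%:M.
Proof. by rewrite /adjmx map_mx1 trmx1. Qed.

Lemma adjmxZ m n (c : C) (A : 'M[C]_(m, n)) : adjmx (c *: A) = c^* *: adjmx A.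
Proof. by apply/matrixP => i j; rewrite !mxE rmorphM. Qed.

Lemma adjmx_castmx m m' (e : m = m') (A : 'M[C]_m) :
  adjmx (castmx (e, e) A) = castmx (e, e) (adjmx A).
Proof. by case: m' / e. Qed.

Lemma adjmx_tens m n p q (A : 'M[C]_(m, n)) (B : 'M[C]_(p, q)) :
  adjmx (tensmx A B) = tensmx (adjmx A) (adjmx B).
Proof. by rewrite /adjmx map_mxT trmx_tens. Qed.

Lemma adjmxX m (A : 'M[C]_m) k : adjmx (A ^+ k) = adjmx A ^+ k.
Proof.
elim: k => [|k IHk]; first exact: adjmx1.
by rewrite exprS exprSr -!mulmxE adjmxM IHk.
Qed.

Lemma bra_mulmx m n (A : 'M[C]_(m, n)) (v : 'cV[C]_n) :
  bra (A *m v) = bra v *m adjmx A.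
Proof. exact: adjmxM. Qed.

Lemma braZ m (c : C) (v : 'cV[C]_m) : bra (c *: v) = c^* *: bra v.
Proof. exact: adjmxZ. Qed.

Lemma expval_anticommuting_eigenvector m (A B : 'M[C]_m) (v : 'cV[C]_m) (s : C) :
  adjmx A = A -> A *m B = - (B *m A) -> A *m v = s *: v ->
  s \is Num.real -> s != 0 -> bra v *m B *m v = 0.
Proof.
move=> hermA antiAB Av s_real s_neq0.
have vA : bra v *m A = s *: bra v.
  by rewrite -hermA -bra_mulmx Av braZ conj_Creal.
have sBv : bra v *m (A *m B) *m v = s *: (bra v *m B *m v).
  by rewrite mulmxA vA -!scalemxAl.
have /eqP : s *: (bra v *m B *m v) = - (s *: (bra v *m B *m v)).
  by rewrite -{1}sBv antiAB mulmxN mulNmx mulmxA -mulmxA Av -scalemxAr.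
rewrite -addr_eq0 -scalerDl scaler_eq0 -mulr2n mulrn_eq0 /= (negbTE s_neq0).
by move/eqP.
Qed.

End ConjugateTranspose.

Lemma castmx_mulmx (R : pzRingType) m m' (e : m = m') (A B : 'M[R]_m) :
  castmx (e, e) A *m castmx (e, e) B = castmx (e, e) (A *m B).
Proof. by case: m' / e. Qed.

Lemma castmxZ (R : pzRingType) m m' (e : m = m') (c : R) (A : 'M[R]_m) :
  castmx (e, e) (c *: A) = c *: castmx (e, e) A.
Proof. by case: m' / e. Qed.

Lemma tensmxZ (R : comPzRingType) m n p q (a b : R)
    (A : 'M[R]_(m, n)) (B : 'M[R]_(p, q)) :
  tensmx (a *: A) (b *: B) = (a * b) *: tensmx A B.
Proof. by apply/matrixP => i j; rewrite !mxE mulrACA. Qed.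

Section Kronecker.
Variable C : numClosedFieldType.

Lemma eq_kronn n (P Q : 'I_n -> 'M[C]_2) : P =1 Q -> kronn P = kronn Q.
Proof.
elim: n P Q => [|n IHn] P Q eqPQ //=.
by rewrite eqPQ (IHn _ (fun j => Q (lift ord0 j))).
Qed.

Lemma mulmx_kronn n (P Q : 'I_n -> 'M[C]_2) :
  kronn P *m kronn Q = kronn (fun j => P j *m Q j).
Proof.
elim: n P Q => [|n IHn] P Q /=; first by rewrite mul1mx.
by rewrite castmx_mulmx tensmx_mul IHn.
Qed.

Lemma kronnZ n (c : 'I_n -> C) (P : 'I_n -> 'M[C]_2) :
  kronn (fun j => c j *: P j) = (\prod_j c j) *: kronn P.
Proof.
elim: n c P => [|n IHn] c P /=; first by rewrite big_ord0 scale1r.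
by rewrite (IHn (fun j => c (lift ord0 j))) tensmxZ castmxZ big_ord_recl.
Qed.

Lemma adjmx_kronn n (P : 'I_n -> 'M[C]_2) :
  adjmx (kronn P) = kronn (fun j => adjmx (P j)).
Proof.
elim: n P => [|n IHn] P /=; first exact: adjmx1.
by rewrite adjmx_castmx adjmx_tens IHn.
Qed.

End Kronecker.

Lemma F2_cases (a : 'F_2) : a = 0 \/ a = 1.
Proof. by case: a => [[|[|//]] ?]; [left | right]; apply: val_inj. Qed.

Section SignF2.
Variable C : numClosedFieldType.

Definition signF2 (c : 'F_2) : C := (-1) ^+ bitn c.

Lemma signF2D : {morph signF2 : a b / a + b >-> a * b}.
Proof.
move=> a b; rewrite /signF2 /bitn.
by case: (F2_cases a) => ->; case: (F2_cases b) => ->;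
  rewrite /= ?expr0 ?expr1 ?mulrNN ?mul1r ?mulr1.
Qed.

Lemma signF2M a b : signF2 (a * b) = (-1) ^+ (bitn a * bitn b).
Proof. by case: (F2_cases a) => ->; case: (F2_cases b) => ->. Qed.

Lemma signF2_sum n (F : 'I_n -> 'F_2) : signF2 (\sum_j F j) = \prod_j signF2 (F j).
Proof. exact: (big_morph _ signF2D (erefl : signF2 0 = 1)). Qed.

Lemma signF2_sqr c : signF2 c * signF2 c = 1.
Proof. by rewrite /signF2 -exprD addnn -signr_odd odd_double. Qed.

End SignF2.

Section Pauli.
Variable C : numClosedFieldType.
Local Notation X := (PauliX C).
Local Notation Z := (PauliZ C).

Lemma PauliZX : Z *m X = - (X *m Z).
Proof.
by apply/matrixP => - [[|[|//]] ?] [[|[|//]] ?];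
  rewrite ?(mxE, big_ord_recr, big_ord0) /=
    ?(mul0r, mulr0, mul1r, mulr1, add0r, addr0, oppr0, opprK).
Qed.

Lemma adjmx_PauliX : adjmx X = X.
Proof.
by apply/matrixP => - [[|[|//]] ?] [[|[|//]] ?];
  rewrite !mxE /= ?(rmorph0, rmorph1).
Qed.

Lemma adjmx_PauliZ : adjmx Z = Z.
Proof.
by apply/matrixP => - [[|[|//]] ?] [[|[|//]] ?];
  rewrite !mxE /= ?(rmorph0, rmorph1, rmorphN1).
Qed.

Definition pauli (a b : 'F_2) : 'M[C]_2 := X ^+ bitn a *m Z ^+ bitn b.

Lemma PauliZX_exp a b :
  Z ^+ bitn b *m X ^+ bitn a = signF2 C (b * a) *: (X ^+ bitn a *m Z ^+ bitn b).
Proof.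
rewrite signF2M; case: (F2_cases a) => ->; case: (F2_cases b) => ->;
  rewrite /bitn /= ?expr0 ?expr1 ?scale1r ?mul1mx ?mulmx1 //.
by rewrite PauliZX scaleN1r.
Qed.

Lemma pauli_mul a b a' b' :
  pauli a b *m pauli a' b' =
  signF2 C (b * a') *: (X ^+ (bitn a + bitn a') *m Z ^+ (bitn b + bitn b')).
Proof.
rewrite /pauli mulmxA -(mulmxA (X ^+ _)) PauliZX_exp -scalemxAr -scalemxAl.
by rewrite !mulmxE mulrA -exprD -mulrA -exprD.
Qed.

Lemma pauli_commute a b a' b' :
  pauli a b *m pauli a' b' = signF2 C (a * b' + b * a') *: (pauli a' b' *m pauli a b).
Proof.
rewrite !pauli_mul scalerA signF2D [a * b']mulrC mulrAC signF2_sqr mul1r.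
by rewrite addnC [(bitn b' + _)%N]addnC.
Qed.

Lemma adjmx_pauli a b : adjmx (pauli a b) = signF2 C (a * b) *: pauli a b.
Proof. by rewrite /pauli adjmxM !adjmxX adjmx_PauliX adjmx_PauliZ PauliZX_exp mulrC. Qed.

End Pauli.

Section WeylOperators.
Variable C : numClosedFieldType.

Lemma Weylop_commute n (x y : F2vec n) :
  Weylop C x *m Weylop C y = signF2 C (symp x y) *: (Weylop C y *m Weylop C x).
Proof.
rewrite /Weylop -!scalemxAl -!scalemxAr !scalerA !mulmx_kronn.
rewrite (eq_kronn (fun j => pauli_commute _ _ _ _ _)) kronnZ -signF2_sum.
rewrite scalerA; congr (_ *: _).
by rewrite [LHS]mulrC [_ * 'i ^+ _]mulrC mulrA.
Qed.

Lemma adjmx_Weylop n (x : F2vec n) : adjmx (Weylop C x) = Weylop C x.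
Proof.
rewrite /Weylop adjmxZ adjmx_kronn (eq_kronn (fun j => adjmx_pauli _ _ _)) kronnZ.
rewrite scalerA; congr (_ *: _).
(* The phase satisfies (i^k)^* = (-1)^k i^k, and (-1)^k is also the product
   of the signs produced by the adjoint Pauli factors. *)
under eq_bigr do rewrite signF2M.
rewrite prodrXr rmorphXn /= conjCi exprNn mulrAC -exprD addnn.
by rewrite -signr_odd odd_double mul1r.
Qed.

Lemma Weyl_eigenvalue n (psi : 'cV[C]_(2 ^ n)) y : y \in Weyl psi ->
  exists s, [/\ Weylop C y *m psi = s *: psi, s \is Num.real & s != 0].
Proof.
rewrite inE => /orP[|] /eqP Wpsi; [exists 1 | exists (-1)].
  by rewrite scale1r rpred1 oner_eq0.
by rewrite scaleN1r rpredN rpred1 oppr_eq0 oner_eq0.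
Qed.

End WeylOperators.

Theorem lemma4p3 (C : numClosedFieldType) (n : nat) (psi : 'cV[C]_(2 ^ n)) :
  pure_state psi -> supp_p psi \subset sperp (Weyl psi).
Proof.
move=> _; apply/subsetP => x; rewrite !inE => px_neq0.
apply/forall_inP => y /Weyl_eigenvalue [s [Wy_psi s_real s_neq0]].
case: (F2_cases (symp y x)) => [-> // | symp_yx].
have anti : Weylop C y *m Weylop C x = - (Weylop C x *m Weylop C y).
  by rewrite Weylop_commute symp_yx scaleN1r.
have expval_x := expval_anticommuting_eigenvector
  (adjmx_Weylop C y) anti Wy_psi s_real s_neq0.
by move: px_neq0; rewrite /p_psi /expval expval_x mxE expr0n mulr0 eqxx.
Qed.
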